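(* Let $S\subseteq[12]$ be such that $\mathsf{MAIS}(G^*_S)<\alpha(G^*_{S,u})$. Then $\beta^*_{\mathcal{B}^*_S}(1)\ge\bar{\chi}(G^*_{S,u})$.
   Context: Index coding model. A unicast index coding problem has receivers $u_1,\dots,u_n$ and messages $\mathbf{x}_j$, each a vector in $\mathcal{A}^m$ for a finite alphabet $\mathcal{A}$ and positive integer $m$ (all messages have the same length). Receiver $u_i$ demands $\mathbf{x}_j$, $j\in W_i$, and knows $\mathbf{x}_j$, $j\in K_i$, with $W_i\cap K_i=\emptyset$, the $W_i$ pairwise disjoint and every message demanded by exactly one receiver. An index code consists of an encoder mapping the messages to a codeword $\mathbf{c}\in\mathcal{A}^\ell$, subsets $R_i\subseteq[\ell]$ (receiver $u_i$ observes only $\mathbf{c}_{R_i}$), and decoders at each $u_i$ mapping $(\mathbf{c}_{R_i},\mathbf{x}_{K_i})$ to $\mathbf{x}_{W_i}$; it is valid if every receiver decodes correctly for all message values. Broadcast rate is $\ell/m$; locality at $u_i$ is $|R_i|/(m|W_i|)$ and the locality of the code is the maximum over receivers (receivers with no demand impose no constraint). $\beta^*_{\mathcal{B}}(r)$ is the infimum of broadcast rates of valid index codes for $\mathcal{B}$, over all $m\ge1$, with locality at most $r$. The problem $\mathcal{B}^*$ has three receivers and 12 messages with $W_1=\{1,2,3,4\}$, $W_2=\{5,6,7,8\}$, $W_3=\{9,10,11,12\}$, $K_1=\{5,6,9,10\}$, $K_2=\{1,2,9,11\}$, $K_3=\{1,3,5,7\}$. For $S\subseteq[12]$, $\mathcal{B}^*_S$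 is the sub-problem with receivers $u_1,u_2,u_3$, messages $\mathbf{x}_j$, $j\in S$, demand sets $W_i\cap S$ and side information sets $K_i\cap S$. $G^*$ is the directed graph on $[12]$ with a directed edge $(a,b)$ iff $b\in K_i$ where $a\in W_i$; $G^*_u$ is the undirected graph on $[12]$ with $\{a,b\}$ an edge iff both $(a,b)$ and $(b,a)$ are edges of $G^*$; $G^*_S$, $G^*_{S,u}$ are the subgraphs induced by $S$. $\mathsf{MAIS}(D)$ is the maximum number of vertices of an acyclic induced subgraph of a directed graph $D$; $\alpha$ and $\bar{\chi}$ are the independence number and clique cover number. *)

From mathcomp Require Import all_boot.
Set Implicit Arguments. Unset Strict Implicit. Unset Printing Implicit Defensive.

(* Messages x_1..x_12 are indexed by j : 'I_12 with x_{j+1} <-> j (0-based).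
   Receivers u_1,u_2,u_3 are indexed by i : 'I_3 (0-based). *)

Definition Wlist (i : 'I_3) : seq nat :=
  match val i with
  | 0 => [:: 1; 2; 3; 4]
  | 1 => [:: 5; 6; 7; 8]
  | _ => [:: 9; 10; 11; 12]
  end.

Definition Klist (i : 'I_3) : seq nat :=
  match val i with
  | 0 => [:: 5; 6; 9; 10]
  | 1 => [:: 1; 2; 9; 11]
  | _ => [:: 1; 3; 5; 7]
  end.

Definition Wset (i : 'I_3) : {set 'I_12} := [set j : 'I_12 | (val j).+1 \in Wlist i].
Definition Kset (i : 'I_3) : {set 'I_12} := [set j : 'I_12 | (val j).+1 \in Klist i].

Definition dedge : rel 'I_12 :=
  fun a b => [exists i : 'I_3, (a \in Wset i) && (b \in Kset i)].

Definition uedge : rel 'I_12 := fun a b => dedge a b && dedge b a.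

Definition dedge_in (T : {set 'I_12}) : rel 'I_12 :=
  fun a b => [&& a \in T, b \in T & dedge a b].

Definition acyclic_in (T : {set 'I_12}) : bool :=
  [forall a, forall b, dedge_in T a b ==> ~~ connect (dedge_in T) b a].

Definition MAIS (S : {set 'I_12}) : nat :=
  \max_(T : {set 'I_12} | (T \subset S) && acyclic_in T) #|T|.

Definition indep (T : {set 'I_12}) : bool :=
  [forall a in T, forall b in T, ~~ uedge a b].
Definition clique (T : {set 'I_12}) : bool :=
  [forall a in T, forall b in T, (a != b) ==> uedge a b].

Definition alpha (S : {set 'I_12}) : nat :=
  \max_(T : {set 'I_12} | (T \subset S) && indep T) #|T|.

(* clique cover number of G*_{S,u}: minimum number of cliques partitioning S
   (the partition of S into singletons shows the minimum is <= #|S|) *)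
Definition clique_cover (S : {set 'I_12}) : nat :=
  \big[minn/#|S|]_(P : {set {set 'I_12}} |
      partition P S && [forall B in P, clique B]) #|P|.

(* An index code for the sub-problem B*_S, alphabet A, message length m,
   codeword length l. *)
Record index_code (S : {set 'I_12}) (A : Type) (m l : nat) := IndexCode {
  enc : (forall j : 'I_12, j \in S -> 'I_m -> A) -> 'I_l -> A;
  recv : 'I_3 -> {set 'I_l};
  dec : forall i : 'I_3,
      (forall k : 'I_l, k \in recv i -> A) ->
      (forall j : 'I_12, j \in Kset i -> j \in S -> 'I_m -> A) ->
      (forall j : 'I_12, j \in Wset i -> j \in S -> 'I_m -> A)
}.

Definition valid_code S A m l (C : index_code S A m l) : Prop :=
  forall (x : forall j : 'I_12, j \in S -> 'I_m -> A) (i : 'I_3)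
         (j : 'I_12) (hW : j \in Wset i) (hS : j \in S) (t : 'I_m),
    @dec S A m l C i (fun k _ => @enc S A m l C x k) (fun j' _ hS' => x j' hS') j hW hS t = x j hS t.

(* locality at most r = 1: |R_i| / (m |W_i cap S|) <= 1 for every receiver
   with a nonempty demand *)
Definition locality_le1 S A m l (C : index_code S A m l) : Prop :=
  forall i : 'I_3, Wset i :&: S != set0 -> #|@recv S A m l C i| <= m * #|Wset i :&: S|.

(* If MAIS(G*_S) < alpha(G*_{S,u}), then S is independent in G*_u. Indeed a
   maximum independent set I of G*_{S,u} cannot be acyclic, and G* has an
   exchange property, checked over all 2^12 vertex sets: for every independent,
   non-acyclic I and every vertex v outside I, some I - c + v with c in I is
   acyclic. For v in S \ I this would give an acyclic subset of S of size
   alpha. Hence the clique cover number is at most |S|, and it remains to show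
   l >= m |S|.

   With locality at most 1, u_i reads at most m |W_i cap S| symbols, while
   decoding forces them to determine its m |W_i cap S| demanded symbols once
   x_{K_i} is fixed. So for fixed side information the read word is a bijective
   image of x_{W_i}: every symbol u_i reads depends on x_{W_i}, and on nothing
   outside x_{W_i cup K_i}. If u_i knows no message demanded by u_j, a symbol
   read by both would not depend on x_{W_j}; independence of S gives, for every
   pair of receivers, one direction without such side information. Hence the
   read sets are disjoint and l >= sum_i m |W_i cap S| = m |S|. *)

From mathcomp Require Import all_boot.
From Stdlib Require Import FunctionalExtensionality.
Set Implicit Arguments. Unset Strict Implicit. Unset Printing Implicit Defensive.

Definition owner (a : nat) : 'I_3 :=
  if a < 4 then ord0 else if a < 8 then Ordinal (isT : 1 < 3) else ord_max.

Lemma in_Wset (i : 'I_3) (a : 'I_12) : (a \in Wset i) = (owner a == i).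
Proof.
rewrite inE -val_eqE; case: i => [[|[|[|i]]] Hi] //=; case: a => a Ha /=;
  do 12! (case: a Ha => [|a] Ha //).
Qed.

Lemma Wset_owner (a : 'I_12) : a \in Wset (owner a).
Proof. by rewrite in_Wset. Qed.

Lemma Wset_Kset_disjoint (i : 'I_3) : [disjoint Wset i & Kset i].
Proof.
rewrite -setI_eq0; apply/eqP/setP => a; rewrite !inE.
case: i => [[|[|[|i]]] Hi] //=; case: a => a Ha /=;
  do 12! (case: a Ha => [|a] Ha //).
Qed.

Lemma dedgeE (a b : 'I_12) : dedge a b = (b \in Kset (owner a)).
Proof.
apply/existsP/idP => [[i /andP[]]|]; first by rewrite in_Wset => /eqP ->.
by exists (owner a); rewrite Wset_owner.
Qed.

Lemma indepS (T U : {set 'I_12}) : T \subset U -> indep U -> indep T.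
Proof.
move=> /subsetP sTU /forall_inP indU; apply/forall_inP => a aT.
by apply/forall_inP => b bT; have /forall_inP := indU a (sTU a aT); apply; apply: sTU.
Qed.

Lemma connect_ranked (T : finType) (e : rel T) (r : T -> nat) :
  (forall x y, e x y -> r x < r y) -> forall x y, connect e x y -> r x <= r y.
Proof.
move=> lt_r x y /connectP[p + ->]; elim: p x => //= z p IHp x /andP[/lt_r/ltnW].
by move=> le_xz /IHp; apply: leq_trans.
Qed.

Lemma ranked_acyclic_in (T : {set 'I_12}) (r : nat -> nat) :
  (forall a b, dedge_in T a b -> r a < r b) -> acyclic_in T.
Proof.
move=> lt_r; apply/forallP => a; apply/forallP => b; apply/implyP => /lt_r ltab.
by apply/negP => /(connect_ranked lt_r); rewrite leqNgt ltab.
Qed.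

Definition vertices : seq nat := iota 0 12.

Definition arc (a b : nat) : bool := b.+1 \in Klist (owner a).

Lemma arcE (a b : 'I_12) : arc a b = dedge a b.
Proof. by rewrite dedgeE inE. Qed.

Definition indepb (p : pred nat) : bool :=
  all (fun a => all (fun b => ~~ [&& p a, p b, arc a b & arc b a]) vertices) vertices.

Definition ranked (p : pred nat) (r : nat -> nat) : bool :=
  all (fun a => all (fun b => [&& p a, p b & arc a b] ==> (r a < r b)) vertices)
    vertices.

Definition deepen (p : pred nat) (d : seq nat) : seq nat :=
  mkseq (fun b => if p b then
    foldr maxn 0 [seq (nth 0 d a).+1 | a <- vertices & p a && arc a b] else 0) 12.

(* When [p] induces an acyclic subgraph, [iter 12 (deepen p)] is its
   longest-path depth; [acyclicb] only checks that this is a ranking strictly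
   increasing along arcs, which certifies acyclicity. *)
Definition acyclicb (p : pred nat) : bool :=
  ranked p (nth 0 (iter 12 (deepen p) (nseq 12 0))).

Definition swapb (p : pred nat) (c v : nat) : pred nat :=
  fun x => (x == v) || p x && (x != c).

(* Written with [if] rather than [&&]/[||]: [vm_compute] evaluates both
   arguments of a boolean connective, and short-circuiting is what keeps
   [exchangeable_bitseqs] fast. *)
Definition exchangeable (p : pred nat) : bool :=
  if ~~ indepb p then true else if acyclicb p then true else
  all (fun v => if p v then true else
    has (fun c => if p c then acyclicb (swapb p c v) else false) vertices) vertices.

Fixpoint bitseqs (n : nat) : seq bitseq :=
  if n is n'.+1 then [seq b :: s | b <- [:: true; false], s <- bitseqs n']
  else [:: [::]].

Lemma mem_bitseqs (s : bitseq) : s \in bitseqs (size s).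
Proof.
elim: s => [|b s IHs] //=; rewrite mem_cat; apply/orP.
by case: b; [left | right]; rewrite ?cats0; apply: map_f.
Qed.

Lemma exchangeable_bitseqs : all (fun s => exchangeable (nth false s)) (bitseqs 12).
Proof. by vm_compute. Qed.

Lemma in_vertices (a : nat) : (a \in vertices) = (a < 12).
Proof. by rewrite mem_iota. Qed.

Section SetsAsPredicates.

Variables (T : {set 'I_12}) (p : pred nat).
Hypothesis pT : forall a : 'I_12, p a = (a \in T).

Lemma indepbP : indep T -> indepb p.
Proof.
move=> /forall_inP indT; apply/allP => a; rewrite in_vertices => lta.
apply/allP => b; rewrite in_vertices => ltb.
rewrite (pT (Ordinal lta)) (pT (Ordinal ltb)).
apply/negP => /and4P[aT bT ab ba]; have /forall_inP := indT _ aT.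
by move/(_ _ bT); rewrite /uedge -!arcE ab ba.
Qed.

Lemma rankedP (r : nat -> nat) :
  ranked p r -> forall a b : 'I_12, dedge_in T a b -> r a < r b.
Proof.
move=> /allP ranked_p a b /and3P[aT bT ab].
move: (ranked_p a); rewrite in_vertices ltn_ord => /(_ isT) /allP /(_ b).
by rewrite in_vertices ltn_ord !pT aT bT arcE ab => /(_ isT).
Qed.

Lemma acyclicbP : acyclicb p -> acyclic_in T.
Proof. by move/rankedP/ranked_acyclic_in. Qed.

End SetsAsPredicates.

Definition bits (T : {set 'I_12}) : bitseq := mkseq (fun x => inord x \in T) 12.

Lemma nth_bits (T : {set 'I_12}) (a : 'I_12) : nth false (bits T) a = (a \in T).
Proof. by rewrite nth_mkseq // inord_val. Qed.

Lemma indep_exchange (I : {set 'I_12}) : indep I -> ~~ acyclic_in I ->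
  forall v, v \notin I -> exists2 c, c \in I & acyclic_in (v |: I :\ c).
Proof.
move=> indI cycI v vI; have pI := nth_bits I.
have := mem_bitseqs (bits I); rewrite size_mkseq => /(allP exchangeable_bitseqs).
rewrite /exchangeable (indepbP pI indI).
case: ifP => [/(acyclicbP pI) acycI | _ /allP/(_ v)]; first by rewrite acycI in cycI.
rewrite in_vertices ltn_ord pI (negbTE vI) => /(_ isT) /hasP[c].
rewrite in_vertices => ltc; case: ifP => // cI acyc.
exists (Ordinal ltc); first by rewrite -pI.
by apply: acyclicbP acyc => a; rewrite /swapb !inE pI andbC.
Qed.

Lemma leq_MAIS (S T : {set 'I_12}) : T \subset S -> acyclic_in T -> #|T| <= MAIS S.
Proof. by move=> TS acT; apply: leq_bigmax_cond; rewrite TS acT. Qed.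

Lemma indep_of_MAIS_lt_alpha (S : {set 'I_12}) : MAIS S < alpha S -> indep S.
Proof.
move=> MAIS_lt.
have [I /andP[IS indI] alphaE] :
    {I : {set 'I_12} | (I \subset S) && indep I & alpha S = #|I|}.
  apply: eq_bigmax_cond; apply/card_gt0P; exists set0; rewrite unfold_in /= sub0set.
  by apply/forall_inP => a; rewrite inE.
have cycI : ~~ acyclic_in I.
  by apply: contraTN MAIS_lt => /(leq_MAIS IS); rewrite alphaE -leqNgt.
suff SI : S \subset I by apply: indepS SI indI.
apply/subsetP => v vS; apply: contraTT MAIS_lt => vI.
have [c cI acyc] := indep_exchange indI cycI vI.
have <- : #|v |: I :\ c| = alpha S.
  by rewrite alphaE cardsU1 !inE (negbTE vI) andbF (cardsD1 c I) cI.
rewrite -leqNgt; apply: leq_MAIS acyc; apply/subsetP => x.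
by rewrite !inE => /predU1P[-> // | /andP[_ /(subsetP IS)]].
Qed.

Lemma clique_cover_le_card (S : {set 'I_12}) : clique_cover S <= #|S|.
Proof.
rewrite /clique_cover; elim/big_rec: _ => // P n _.
by rewrite geq_min => ->; rewrite orbT.
Qed.

Lemma card_bigcup_disjoint (I T : finType) (P : pred I) (F : I -> {set T}) :
  {in P &, forall i j, i != j -> [disjoint F i & F j]} ->
  #|\bigcup_(i | P i) F i| = \sum_(i | P i) #|F i|.
Proof.
elim: {P}_.+1 {-2}P (ltnSn #|P|) => // n IHn P ltPn dF.
case: (pickP P) => [i Pi | P0]; last by rewrite !big_pred0 ?cards0.
rewrite (bigD1 i Pi) (bigD1 i Pi) /= cardsU.
rewrite disjoint_setI0 ?cards0 ?subn0; last first.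
  by apply: bigcup_disjoint => j /andP[Pj ji]; apply: dF; rewrite // eq_sym.
congr (_ + _); apply: IHn => [|j k /andP[Pj _] /andP[Pk _]]; last exact: dF.
move: ltPn; rewrite (cardD1 i) unfold_in Pi add1n ltnS; apply: leq_trans.
by apply: subset_leq_card; apply/subsetP => j; rewrite !inE andbC.
Qed.

Definition demand (S : {set 'I_12}) (i : 'I_3) : {set 'I_12} := Wset i :&: S.

Lemma Wset_disjoint (i j : 'I_3) : i != j -> [disjoint Wset i & Wset j].
Proof.
move=> ij; rewrite -setI_eq0; apply/eqP/setP => a; rewrite in_set0 in_setI !in_Wset.
by apply/negbTE; apply: contra ij => /andP[/eqP <- /eqP ->].
Qed.

Lemma card_demand_sum (S : {set 'I_12}) : \sum_i #|demand S i| = #|S|.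
Proof.
rewrite -card_bigcup_disjoint => [|i j _ _ ij]; last first.
  apply: disjointWl (subsetIl _ _) (disjointWr (subsetIl _ _) _).
  exact: Wset_disjoint.
apply: eq_card => a; apply/bigcupP/idP => [[i _ /setIP[]] // | aS].
by exists (owner a); rewrite // inE Wset_owner.
Qed.

Lemma indep_demand_side (S : {set 'I_12}) (i j : 'I_3) : indep S ->
  [disjoint demand S j & Kset i] || [disjoint demand S i & Kset j].
Proof.
move=> /forall_inP indS; rewrite -!setI_eq0.
case: (eqVneq (demand S j :&: Kset i) set0) => //= /set0Pn[b].
case: (eqVneq (demand S i :&: Kset j) set0) => //= /set0Pn[a].
rewrite !in_setI => /andP[/andP[aW aS] aK] /andP[/andP[bW bS] bK].
have uab : uedge a b.
  by apply/andP; split; apply/existsP; [exists i | exists j]; apply/andP.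
by move: (indS a aS) => /forall_inP/(_ b bS); rewrite uab.
Qed.

Section LocalityOneCodes.

Variables (S : {set 'I_12}) (A : finType) (m l : nat) (C : index_code S A m l).
Hypothesis A_nontrivial : 1 < #|A|.
Hypothesis C_valid : valid_code C.

Local Notation msgs := (forall j : 'I_12, j \in S -> 'I_m -> A).
Local Notation symbol i := {p : 'I_12 * 'I_m | p.1 \in demand S i}.

Definition agree (D : {set 'I_12}) (x y : msgs) : Prop :=
  forall j (hj : j \in S) t, j \in D -> x j hj t = y j hj t.

Definition mix (i : 'I_3) (x : msgs) (z : {ffun symbol i -> A}) : msgs :=
  fun j hj t => if (insub (j, t) : option (symbol i)) is Some q then z q else x j hj t.
Arguments mix {i} x z j hj t.

Lemma symbol_in_S i (q : symbol i) : (val q).1 \in S.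
Proof. by case/setIP: (valP q). Qed.

Definition restrict (i : 'I_3) (x : msgs) : {ffun symbol i -> A} :=
  [ffun q => x (val q).1 (symbol_in_S q) (val q).2].

Definition read_word (R : {set 'I_l}) (x : msgs) : {ffun {k | k \in R} -> A} :=
  [ffun k => enc C x (val k)].

Lemma read_wordP R x y : read_word R x = read_word R y <-> {in R, enc C x =1 enc C y}.
Proof.
split => [/ffunP xy k kR | xy]; last by apply/ffunP => k; rewrite !ffunE xy ?(valP k).
by have := xy (exist _ k kR); rewrite !ffunE.
Qed.

Lemma card_symbol_words i : #|{ffun symbol i -> A}| = #|A| ^ (m * #|demand S i|).
Proof.
rewrite card_ffun card_sig; congr (_ ^ _).
rewrite (eq_card (B := setX (demand S i) [set: 'I_m])) => [|[j t]]; last first.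
  by rewrite !inE andbT.
by rewrite cardsX cardsT card_ord mulnC.
Qed.

Lemma card_read_words (R : {set 'I_l}) : #|{ffun {k | k \in R} -> A}| = #|A| ^ #|R|.
Proof. by rewrite card_ffun card_sig; congr (_ ^ _); apply: eq_card. Qed.

Lemma mix_out i x (z : {ffun symbol i -> A}) j hj t :
  j \notin Wset i -> mix x z j hj t = x j hj t.
Proof. by move=> jW; rewrite /mix insubF // in_setI (negbTE jW). Qed.

Lemma mix_in i x (z : {ffun symbol i -> A}) j hj t (hq : (j, t).1 \in demand S i) :
  mix x z j hj t = z (exist _ (j, t) hq).
Proof.
rewrite /mix; case: insubP => [q _ qE|]; last by rewrite hq.
by congr (z _); apply: val_inj.
Qed.

Lemma mix_restrict i x y : agree (Wset i) x y -> mix x (restrict i y) = x.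
Proof.
move=> xy; apply: functional_extensionality_dep => j.
apply: functional_extensionality_dep => hj; apply: functional_extensionality => t.
have [jW | jW] := boolP (j \in Wset i); last exact: mix_out.
have hq : (j, t).1 \in demand S i by rewrite in_setI jW hj.
rewrite (mix_in _ _ _ hq) ffunE /=; move: (symbol_in_S _) => hj' /=.
by rewrite (bool_irrelevance hj' hj) xy.
Qed.

Lemma decode_agree i x y : agree (Kset i) x y ->
  {in recv C i, enc C x =1 enc C y} -> agree (Wset i) x y.
Proof.
move=> xyK xyR j hj t jW.
rewrite -(C_valid x jW hj t) -(C_valid y jW hj t); f_equal.
  apply: functional_extensionality_dep => k.
  by apply: functional_extensionality => kR; apply: xyR.
apply: functional_extensionality_dep => j'; apply: functional_extensionality_dep => j'K.
apply: functional_extensionality_dep => hj'; apply: functional_extensionality => t'.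
exact: xyK.
Qed.

Lemma mix_inj i x y (z1 z2 : {ffun symbol i -> A}) : agree (Kset i) x y ->
  {in recv C i, enc C (mix x z1) =1 enc C (mix y z2)} -> z1 = z2.
Proof.
move=> xyK /(decode_agree _) z12; apply/ffunP => -[[j t] hq].
have /setIP[jW hj] := hq.
rewrite -(mix_in x z1 hj hq) -(mix_in y z2 hj hq); apply: z12 => // j' hj' t' j'K.
by rewrite !mix_out ?xyK ?(disjointFl (Wset_Kset_disjoint i) j'K).
Qed.

Lemma demand_le_read i x (R : {set 'I_l}) :
  (forall z1 z2 : {ffun symbol i -> A},
     {in R, enc C (mix x z1) =1 enc C (mix x z2)} ->
     {in recv C i, enc C (mix x z1) =1 enc C (mix x z2)}) ->
  m * #|demand S i| <= #|R|.
Proof.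
move=> R_det; rewrite -(leq_exp2l _ _ A_nontrivial).
rewrite -card_symbol_words -card_read_words.
apply: (leq_card (fun z => read_word R (mix x z))) => z1 z2 /read_wordP z12.
exact: mix_inj (fun _ _ _ _ => erefl) (R_det _ _ z12).
Qed.

Hypothesis C_local : locality_le1 C.

Lemma card_recv i : demand S i != set0 -> #|recv C i| = m * #|demand S i|.
Proof.
move=> ne; apply/eqP; rewrite eqn_leq C_local //=.
have [a0 _] := card_gt0P (ltnW A_nontrivial).
exact: (demand_le_read (x := fun _ _ _ => a0)).
Qed.

Lemma enc_mix_local i x y (z : {ffun symbol i -> A}) :
  demand S i != set0 -> agree (Kset i) x y ->
  {in recv C i, enc C (mix x z) =1 enc C (mix y z)}.
Proof.
move=> ne xyK; pose F (w : {ffun symbol i -> A}) := read_word (recv C i) (mix x w).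
have F_inj : injective F.
  by move=> z1 z2 /read_wordP; apply: mix_inj.
have [g _ Fg] : bijective F.
  by apply: (inj_card_bij F_inj); rewrite card_read_words card_symbol_words card_recv.
have gz : g (read_word (recv C i) (mix y z)) = z.
  by apply: mix_inj xyK _; apply/read_wordP; exact: Fg.
by apply/read_wordP; rewrite -[z in mix x z]gz; exact: Fg.
Qed.

Lemma enc_recv_local i x y : demand S i != set0 ->
  agree (Wset i) x y -> agree (Kset i) x y -> {in recv C i, enc C x =1 enc C y}.
Proof.
move=> ne xyW xyK; have := enc_mix_local (restrict i x) ne xyK.
rewrite mix_restrict // (@mix_restrict i y x) // => j hj t jW.
by rewrite xyW.
Qed.

Lemma recv_not_constant i x k : demand S i != set0 -> k \in recv C i ->
  ~ (forall z1 z2 : {ffun symbol i -> A}, enc C (mix x z1) k = enc C (mix x z2) k).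
Proof.
move=> ne kR k_const.
have : m * #|demand S i| <= #|recv C i :\ k|.
  apply: demand_le_read => z1 z2 z12 k' k'R.
  have [-> | k'k] := eqVneq k' k; first exact: k_const.
  by apply: z12; rewrite !inE k'k.
by rewrite -card_recv // (cardsD1 k) kR add1n ltnn.
Qed.

Lemma recv_disjoint i j : i != j -> demand S i != set0 -> demand S j != set0 ->
  [disjoint demand S j & Kset i] -> [disjoint recv C i & recv C j].
Proof.
move=> ij nei nej dK; rewrite -setI_eq0; apply/eqP/setP => k; rewrite !inE.
apply/andP => -[ki kj].
have notWj j' : j' \in S -> j' \in Wset i :|: Kset i -> j' \notin Wset j.
  move=> hj' /setUP[j'W | j'K]; first by rewrite (disjointFr (Wset_disjoint ij) j'W).
  by apply: contraL j'K => j'W; rewrite (disjointFr dK) // in_setI j'W.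
have [a0 _] := card_gt0P (ltnW A_nontrivial).
apply: (recv_not_constant (x := fun _ _ _ => a0) nej kj) => z1 z2.
by apply: (enc_recv_local nei) ki => j' hj' t j'D;
  rewrite !mix_out // notWj // in_setU j'D ?orbT.
Qed.

Lemma rate_ge_card_of_indep : indep S -> m * #|S| <= l.
Proof.
move=> indS; pose P i := demand S i != set0.
have disjR : {in P &, forall i j, i != j -> [disjoint recv C i & recv C j]}.
  move=> i j Pi Pj ij; case/orP: (indep_demand_side i j indS) => dK.
    exact: recv_disjoint.
  by rewrite disjoint_sym recv_disjoint // eq_sym.
rewrite -card_demand_sum big_distrr /= (bigID P) /= [X in _ + X]big1; last first.
  by move=> i /negPn/eqP ->; rewrite cards0 muln0.
rewrite addn0 -(eq_bigr _ (fun i => @card_recv i)) -card_bigcup_disjoint //.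
exact: leq_trans (max_card _) (eq_leq (card_ord l)).
Qed.

End LocalityOneCodes.

Theorem lemma6 (S : {set 'I_12}) :
  MAIS S < alpha S ->
  forall (A : finType), 1 < #|A| ->
  forall (m l : nat), 0 < m ->
  forall C : index_code S A m l,
    valid_code C -> locality_le1 C ->
    clique_cover S * m <= l.
Proof.
move=> MAIS_lt A A_nontrivial m l _ C C_valid C_local.
have indS := indep_of_MAIS_lt_alpha MAIS_lt.
apply: leq_trans (rate_ge_card_of_indep A_nontrivial C_valid C_local indS).
by rewrite mulnC leq_mul2l clique_cover_le_card orbT.
Qed.
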